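(* For every integer $n$ (with $q\neq 0$ if $n<0$), $$h_{n+1}^2-qh_n^2=d^2\left[\left(b^2-a^2q\right)u_{2n+1}-aq\left(2b-ap\right)u_{2n}\right].$$
   Context: Let $p,q,a,b$ be complex numbers and let $d=\sqrt{p^2-4q}$. The sequence $(u_n)$ is defined by $u_0=0$, $u_1=1$, $u_n=pu_{n-1}-qu_{n-2}$. The Horadam-Lucas sequence $(h_n)$ is defined by $h_0=2b-ap$, $h_1=bp-2aq$, $h_n=ph_{n-1}-qh_{n-2}$. When $q\neq0$, both are extended to negative indices by $x_{n-2}=(px_{n-1}-x_n)/q$. *)

From HB Require Import structures.
From mathcomp Require Import all_boot all_order all_algebra.
From mathcomp Require Import complex.
From mathcomp Require Import reals.
Set Implicit Arguments. Unset Strict Implicit. Unset Printing Implicit Defensive.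
Import Order.TTheory GRing.Theory Num.Theory.
Local Open Scope ring_scope.

Section Seq2.
Variable F : fieldType.
Variables (p q x0 x1 : F).

Fixpoint fwd2 (n : nat) : F * F :=
  match n with
  | 0%N => (x0, x1)
  | n'.+1 => let: (a, b) := fwd2 n' in (b, p * b - q * a)
  end.

(* backward pairs (x_{-n}, x_{-n+1}) for n >= 0,
   via x_{k-2} = (p x_{k-1} - x_k) / q *)
Fixpoint bwd2 (n : nat) : F * F :=
  match n with
  | 0%N => (x0, x1)
  | n'.+1 => let: (a, b) := bwd2 n' in ((p * a - b) / q, a)
  end.

Definition seq2 (z : int) : F :=
  match z with
  | Posz n => (fwd2 n).1
  | Negz n => (bwd2 n.+1).1
  end.
End Seq2.

Definition useq (F : fieldType) (p q : F) : int -> F := seq2 p q 0 1.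

Definition hseq (F : fieldType) (p q a b : F) : int -> F :=
  seq2 p q (2 * b - a * p) (b * p - 2 * a * q).

(* Both sequences satisfy the same second-order linear recurrence, whose
   solutions are determined by two consecutive values. Hence
   h_k = h_1 u_k + h_0 (u_{k+1} - p u_k), and the addition formula
   x_{m+k} = x_{m+1} u_k + x_m (u_{k+1} - p u_k) gives the doubling formulas
   u_{2n+1} = u_{n+1}^2 - q u_n^2 and u_{2n} = u_n (2 u_{n+1} - p u_n).
   Substituting all of these, both sides become polynomials in p, q, a, b,
   u_n, u_{n+1} that agree identically, since d^2 = p^2 - 4q. *)
From HB Require Import structures.
From mathcomp Require Import all_boot all_order all_algebra.
From mathcomp Require Import complex.
From mathcomp Require Import reals.
From mathcomp Require Import ring.
Import Order.TTheory GRing.Theory Num.Theory.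
Set Implicit Arguments. Unset Strict Implicit.
Local Open Scope ring_scope.

Section LinearRecurrence.
Variable F : fieldType.
Variables (p q : F).

(* Negative indices count only when q != 0, as the backward extension divides by q. *)
Definition admissible (z : int) : bool := (0 <= z) || (q != 0).

Lemma admissible1 : admissible 1.
Proof. by []. Qed.

Lemma admissibleD z m : admissible z -> admissible m -> admissible (z + m).
Proof.
rewrite /admissible; case: (q != 0); rewrite ?orbT // !orbF.
exact: addr_ge0.
Qed.

Definition recurrent (f : int -> F) :=
  forall z, admissible z -> f (z + 2) = p * f (z + 1) - q * f z.

Lemma recurrent_shift (f : int -> F) m : admissible m -> recurrent f ->
  recurrent (fun k => f (k + m)).
Proof.
by move=> gm rf z gz /=; rewrite (addrAC z 2) (addrAC z 1) rf // admissibleD.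
Qed.

Lemma recurrent_eq0 (f : int -> F) : recurrent f -> f 0 = 0 -> f 1 = 0 ->
  forall z, admissible z -> f z = 0.
Proof.
move=> rf f0 f1.
have fwd (n : nat) : f n = 0 /\ f (n%:Z + 1) = 0.
  elim: n => [|n [fn fn1]]; first by rewrite add0r.
  have eS : n.+1%:Z = n%:Z + 1 by rewrite -addn1 PoszD.
  have eSS : n.+1%:Z + 1 = n%:Z + 2 by rewrite eS -addrA.
  by rewrite eSS rf // eS fn fn1 !mulr0 subr0.
have bwd (n : nat) : q != 0 -> f (- n%:Z) = 0 /\ f (- n%:Z + 1) = 0.
  move=> qn0; elim: n => [|n [fn fn1]]; first by rewrite oppr0 add0r.
  have eS : - n.+1%:Z + 1 = - n%:Z by rewrite -addn1 PoszD opprD addrNK.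
  split; last by rewrite eS.
  have /(rf _) : admissible (- n.+1%:Z) by rewrite /admissible qn0 orbT.
  have eSS : - n.+1%:Z + 2 = - n%:Z + 1 by rewrite -addn1 PoszD; ring.
  rewrite eSS eS fn fn1 mulr0 sub0r.
  by move/esym/eqP; rewrite oppr_eq0 mulf_eq0 (negbTE qn0) => /eqP.
case=> [n|n] gz; first by case: (fwd n).
have qn0 : q != 0 by move: gz; rewrite /admissible.
by rewrite NegzE; case: (bwd n.+1 qn0).
Qed.

Lemma recurrent_uniq (f g : int -> F) : recurrent f -> recurrent g ->
  f 0 = g 0 -> f 1 = g 1 -> forall z, admissible z -> f z = g z.
Proof.
move=> rf rg e0 e1 z gz; apply/eqP; rewrite -subr_eq0; apply/eqP.
have rfg : recurrent (fun z => f z - g z).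
  by move=> k gk; rewrite rf // rg //; ring.
by apply: (recurrent_eq0 rfg) => //=; rewrite ?e0 ?e1 subrr.
Qed.

Section TwoSided.
Variables x0 x1 : F.

Lemma fwd2S n : fwd2 p q x0 x1 n.+1 =
  ((fwd2 p q x0 x1 n).2, p * (fwd2 p q x0 x1 n).2 - q * (fwd2 p q x0 x1 n).1).
Proof. by rewrite /=; case: (fwd2 p q x0 x1 n). Qed.

Lemma bwd2S n : bwd2 p q x0 x1 n.+1 =
  ((p * (bwd2 p q x0 x1 n).1 - (bwd2 p q x0 x1 n).2) / q, (bwd2 p q x0 x1 n).1).
Proof. by rewrite /=; case: (bwd2 p q x0 x1 n). Qed.

Lemma seq2N (n : nat) : seq2 p q x0 x1 (- n%:Z) = (bwd2 p q x0 x1 n).1.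
Proof. by case: n => [|n] //; rewrite -NegzE. Qed.

Lemma recurrent_seq2 : recurrent (seq2 p q x0 x1).
Proof.
case=> [n|n] gz.
  have -> : Posz n + 2 = n.+2 by rewrite -[n.+2]addn2 PoszD.
  have -> : Posz n + 1 = n.+1 by rewrite -[n.+1]addn1 PoszD.
  by rewrite /seq2 !fwd2S.
have qn0 : q != 0 by move: gz; rewrite /admissible.
case: n {gz} => [|n].
  by rewrite /seq2 /=; field.
have -> : Negz n.+1 = - n.+2%:Z by rewrite NegzE.
have -> : - n.+2%:Z + 1 = - n.+1%:Z by rewrite -addn1 PoszD opprD addrNK.
have -> : - n.+2%:Z + 2 = - n%:Z by rewrite -addn2 PoszD opprD addrNK.
by rewrite !seq2N !bwd2S /=; field.
Qed.

End TwoSided.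

Notation u := (useq p q).

Lemma recurrent_useq : recurrent u.
Proof. exact: recurrent_seq2. Qed.

Lemma useq2 : u 2 = p.
Proof. by rewrite /useq /seq2 /=; ring. Qed.

(* [u (k + 1) - p * u k] is the solution with initial values 1, 0. *)
Lemma recurrentE (f : int -> F) : recurrent f -> forall k, admissible k ->
  f k = f 1 * u k + f 0 * (u (k + 1) - p * u k).
Proof.
move=> rf; apply: recurrent_uniq => //; last by rewrite useq2 /=; ring.
- move=> z gz /=.
  have /= -> := recurrent_shift admissible1 recurrent_useq gz.
  by rewrite (recurrent_useq gz); ring.
- by rewrite add0r /=; ring.
Qed.

Lemma recurrent_addE (f : int -> F) m k : recurrent f ->
  admissible m -> admissible k ->
  f (k + m) = f (m + 1) * u k + f m * (u (k + 1) - p * u k).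
Proof.
move=> rf gm gk.
by have := recurrentE (recurrent_shift gm rf) gk; rewrite /= add0r (addrC 1).
Qed.

Lemma useq_double_add1 n : admissible n ->
  u (2 * n + 1) = u (n + 1) ^+ 2 - q * u n ^+ 2.
Proof.
move=> gn; have gn1 := admissibleD gn admissible1.
have -> : 2 * n + 1 = n + (n + 1) by ring.
rewrite (recurrent_addE recurrent_useq) //.
have -> : n + 1 + 1 = n + 2 by rewrite -addrA.
by rewrite recurrent_useq //; ring.
Qed.

Lemma useq_double n : admissible n -> u (2 * n) = u n * (2 * u (n + 1) - p * u n).
Proof.
move=> gn; have -> : 2 * n = n + n by ring.
by rewrite (recurrent_addE recurrent_useq) //; ring.
Qed.

End LinearRecurrence.

Theorem mainTheorem8 (R : realType) (p q a b : R[i]) (n : int) :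
  (n < 0 -> q != 0) ->
  let d := sqrtC (p ^+ 2 - 4 * q) in
  hseq p q a b (n + 1) ^+ 2 - q * hseq p q a b n ^+ 2 =
  d ^+ 2 * ((b ^+ 2 - a ^+ 2 * q) * useq p q (2 * n + 1)
            - a * q * (2 * b - a * p) * useq p q (2 * n)).
Proof.
move=> hn d; rewrite /d sqrtCK.
have gn : admissible q n by rewrite /admissible; case: leP => // /hn ->.
have gn1 := admissibleD gn (admissible1 q).
have rh : recurrent p q (hseq p q a b) by exact: recurrent_seq2.
rewrite (recurrentE rh gn) (recurrentE rh gn1) useq_double_add1 // useq_double //.
have -> : n + 1 + 1 = n + 2 by rewrite -addrA.
by rewrite (recurrent_useq p gn) /hseq /=; ring.
Qed.
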